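(* Let $R>0$ and $\phi\in C_c^\infty(\mathbb R)$ be non-negative and even with $\mathrm{supp}(\phi)=[-R,R]$ and $\phi>0$ on $(-R,R)$; let $\psi(x)=\int_{-\infty}^xy\phi(y)\,dy$. Let $N\in\mathbb N$, weights $\omega^i\in[0,1]$ with $\sum_i\omega^i=1$, and $x_0^i\in\mathbb R$ with $\sup_{i,j}|x_0^i-x_0^j|<R$. For $i=1,\dots,N$ let $x^i$ be the unique global solutions of $$\frac{d}{dt}x^i=-\sum_{j=1}^N\omega^j\psi'(x^i-x^j),\qquad x^i(0)=x_0^i.$$ Then there exists a constant $K>0$ depending only on $\psi$ such that $|x^i(t)-x^j(t)|\ge|x_0^i-x_0^j|e^{-Kt}$ for all $i,j=1,\dots,N$ and all $t>0$. *)

From Stdlib Require Import Reals List.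
From Coquelicot Require Import Coquelicot.
Open Scope R_scope.

Definition smooth (f : R -> R) : Prop :=
  forall (n : nat) (x : R), ex_derive (Derive_n f n) x.

Definition psi_of (phi : R -> R) (x : R) : R :=
  RInt_gen (fun y => y * phi y) (Rbar_locally m_infty) (at_point x).

Definition sumN (N : nat) (f : nat -> R) : R :=
  fold_right Rplus 0 (map f (seq 0 N)).

From Stdlib Require Import Reals List Lra Lia Psatz.
From Coquelicot Require Import Coquelicot.
Open Scope R_scope.

(* Since phi is smooth with compact support, psi'(y) = y phi(y) is globally
   Lipschitz, say with constant L.  As the weights form a probability vector,
   the difference d = x^i - x^j of two solutions satisfies |d'| <= L |d|, and
   Gronwall's argument gives |d(t)| >= |d(0)| e^{-K t} with K = L + 1. *)

Lemma smooth_continuous_Derive_n (f : R -> R) (n : nat) (x : R) :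
  smooth f -> continuous (Derive_n f n) x.
Proof. intros Hf; apply (ex_derive_continuous (Derive_n f n)), Hf. Qed.

Section CompactSupport.

Variable r : R.

Lemma Derive_outside_support (f : R -> R) (z : R) :
  (forall x, r <= Rabs x -> f x = 0) -> r < Rabs z -> Derive f z = 0.
Proof.
  intros Hf Hz.
  assert (Hloc : locally z (fun y => f y = 0)).
  { exists (mkposreal _ (proj2 (Rlt_0_minus _ _) Hz)); intros y Hy; apply Hf.
    change R in y; change (Rabs (y - z) < Rabs z - r) in Hy.
    pose proof (Rabs_triang_inv z (z - y)) as Htri.
    replace (z - (z - y)) with y in Htri by ring.
    rewrite Rabs_minus_sym in Hy; lra. }
  rewrite (Derive_ext_loc f (fun _ => 0) z Hloc); apply Derive_const.
Qed.

Lemma bounded_of_continuous_compact_support (g : R -> R) :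
  (forall z, continuous g z) -> (forall z, r < Rabs z -> g z = 0) ->
  exists M, 0 <= M /\ forall z, Rabs (g z) <= M.
Proof.
  intros Hg Hsupp.
  destruct (continuity_ab_maj (fun z => Rabs (g z)) (- Rabs r) (Rabs r))
    as [zmax [Hmax _]].
  - pose proof (Rabs_pos r); lra.
  - intros z _; apply continuity_pt_filterlim, (continuous_comp g Rabs);
      [apply Hg | apply continuous_Rabs].
  - exists (Rabs (g zmax)); split; [apply Rabs_pos |]; intros z.
    destruct (Rle_lt_dec (Rabs z) r) as [Hz | Hz].
    + apply Hmax. pose proof (Rle_abs r). apply Rabs_le_between; lra.
    + rewrite Hsupp, Rabs_R0 by exact Hz; apply Rabs_pos.
Qed.

Lemma lipschitz_of_compact_support (f df : R -> R) :
  (forall z, is_derive f z (df z)) -> (forall z, continuous df z) ->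
  (forall x, r <= Rabs x -> f x = 0) ->
  exists L, 0 <= L /\ forall a b, Rabs (f a - f b) <= L * Rabs (a - b).
Proof.
  intros Hf Hdf Hsupp.
  destruct (bounded_of_continuous_compact_support df Hdf) as [L [HL Hbound]].
  { intros z Hz; rewrite <- (is_derive_unique f z (df z) (Hf z)).
    exact (Derive_outside_support f z Hsupp Hz). }
  exists L; split; [exact HL |]; intros a b.
  apply (bounded_variation f df); intros t _; split; [apply Hf | apply Hbound].
Qed.

End CompactSupport.

Section Psi.

Variables (r : R) (phi : R -> R).
Hypothesis phi_smooth : smooth phi.
Hypothesis phi_supp : forall x, r <= Rabs x -> phi x = 0.

Let integrand_continuous (y : R) : continuous (fun y => y * phi y) y.
Proof.
  apply (continuous_mult (fun y => y) phi);
    [apply continuous_id | exact (smooth_continuous_Derive_n phi 0%nat y phi_smooth)].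
Qed.

Lemma psi_of_RInt (z : R) : psi_of phi z = RInt (fun y => y * phi y) (- r) z.
Proof.
  unfold psi_of; apply is_RInt_gen_unique.
  rewrite <- (plus_zero_l (RInt _ (- r) z)).
  apply (is_RInt_gen_Chasles (V := R_NormedModule) _ (- r)).
  - intros P HP; apply Filter_prod with (fun a => a < - r) (fun b => b = - r).
    + exists (- r); tauto.
    + reflexivity.
    + intros a b Ha -> ; exists zero; split; [| exact (locally_singleton _ _ HP)].
      apply is_RInt_ext with (fun _ => 0).
      { intros y Hy; simpl in Hy; rewrite Rmin_left, Rmax_right in Hy by lra.
        rewrite phi_supp, Rmult_0_r; [reflexivity |].
        pose proof (Rabs_maj2 y); lra. }
      pose proof (is_RInt_const (V := R_NormedModule) a (- r) 0) as Hconst.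
      rewrite (scal_zero_r (V := R_NormedModule)) in Hconst; exact Hconst.
  - apply is_RInt_gen_at_point, (RInt_correct (V := R_CompleteNormedModule)).
    apply ex_RInt_continuous; intros; apply integrand_continuous.
Qed.

Lemma Derive_psi_of (z : R) : Derive (psi_of phi) z = z * phi z.
Proof.
  rewrite (Derive_ext _ _ z psi_of_RInt).
  apply is_derive_unique, (is_derive_RInt (V := R_CompleteNormedModule) (fun y => y * phi y) _ (- r)).
  - apply filter_forall; intros b; apply (RInt_correct (V := R_CompleteNormedModule)).
    apply ex_RInt_continuous; intros; apply integrand_continuous.
  - apply integrand_continuous.
Qed.

Lemma Derive_psi_of_lipschitz :
  exists L, 0 <= L /\
    forall a b, Rabs (Derive (psi_of phi) a - Derive (psi_of phi) b) <= L * Rabs (a - b).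
Proof.
  destruct (lipschitz_of_compact_support r (fun z => z * phi z)
              (fun z => phi z + z * Derive phi z)) as [L [HL Hlip]].
  - intros z; auto_derive; [exact (phi_smooth 0%nat z) | rewrite !Rmult_1_l; reflexivity].
  - intros z; apply (continuous_plus phi).
    + exact (smooth_continuous_Derive_n phi 0%nat z phi_smooth).
    + apply (continuous_mult (fun y => y) (Derive phi)); [apply continuous_id |].
      exact (smooth_continuous_Derive_n phi 1%nat z phi_smooth).
  - intros x Hx; rewrite phi_supp by exact Hx; ring.
  - exists L; split; [exact HL |]; intros a b; rewrite !Derive_psi_of; apply Hlip.
Qed.

End Psi.

Lemma sumN_0 (f : nat -> R) : sumN 0 f = 0.
Proof. reflexivity. Qed.

Lemma sumN_S (N : nat) (f : nat -> R) : sumN (S N) f = sumN N f + f N.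
Proof.
  unfold sumN; rewrite seq_S, map_app, fold_right_app; simpl.
  induction (map f (seq 0 N)) as [| a l IH]; simpl; [ring | rewrite IH; ring].
Qed.

Lemma sumN_minus (N : nat) (f g : nat -> R) :
  sumN N f - sumN N g = sumN N (fun k => f k - g k).
Proof. induction N as [| N IH]; [rewrite !sumN_0 | rewrite !sumN_S, <- IH]; ring. Qed.

Lemma sumN_scal_r (N : nat) (f : nat -> R) (c : R) :
  sumN N (fun k => f k * c) = sumN N f * c.
Proof. induction N as [| N IH]; [rewrite !sumN_0 | rewrite !sumN_S, IH]; ring. Qed.

Lemma Rabs_sumN_le (N : nat) (f g : nat -> R) :
  (forall k, (k < N)%nat -> Rabs (f k) <= g k) -> Rabs (sumN N f) <= sumN N g.
Proof.
  induction N as [| N IH]; intros Hfg.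
  - rewrite !sumN_0, Rabs_R0; lra.
  - rewrite !sumN_S. eapply Rle_trans; [apply Rabs_triang |].
    apply Rplus_le_compat; [apply IH; intros k Hk |]; apply Hfg; lia.
Qed.

Lemma weighted_sum_lipschitz (N : nat) (w y : nat -> R) (g : R -> R) (L a b : R) :
  (forall k, (k < N)%nat -> 0 <= w k) -> sumN N w = 1 ->
  (forall u v, Rabs (g u - g v) <= L * Rabs (u - v)) ->
  Rabs (sumN N (fun k => w k * g (a - y k)) - sumN N (fun k => w k * g (b - y k)))
  <= L * Rabs (a - b).
Proof.
  intros Hw Hsum Hg.
  rewrite sumN_minus.
  replace (L * Rabs (a - b)) with (sumN N w * (L * Rabs (a - b)))
    by (rewrite Hsum; ring).
  rewrite <- sumN_scal_r. apply Rabs_sumN_le; intros k Hk.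
  rewrite <- Rmult_minus_distr_l, Rabs_mult, Rabs_pos_eq by auto.
  apply Rmult_le_compat_l; [auto |].
  replace (a - b) with ((a - y k) - (b - y k)) by ring. apply Hg.
Qed.

Lemma nondecreasing_of_derive_nonneg (f df : R -> R) (a b : R) :
  (forall s, is_derive f s (df s)) -> (forall s, 0 <= df s) -> a <= b -> f a <= f b.
Proof.
  intros Hf Hdf Hab.
  destruct (MVT_gen f a b df) as [c [_ Hc]].
  - intros s _; apply Hf.
  - intros s _; apply continuity_pt_filterlim, (ex_derive_continuous f).
    eexists; apply Hf.
  - assert (0 <= df c * (b - a)) by (apply Rmult_le_pos; [apply Hdf | lra]). lra.
Qed.

(* Gronwall: [(d s e^{K s})^2] is nondecreasing since its derivative is
   [2 e^{2 K s} (d D + K d^2)] and [|d D| <= K d^2]. *)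
Lemma gronwall_lower_bound (d D : R -> R) (K t : R) :
  (forall s, is_derive d s (D s)) -> (forall s, Rabs (D s) <= K * Rabs (d s)) ->
  0 <= t -> Rabs (d 0) * exp (- K * t) <= Rabs (d t).
Proof.
  intros Hd HD Ht.
  set (f := fun s => (d s * exp (K * s)) ^ 2).
  set (df := fun s => 2 * exp (K * s) ^ 2 * (d s * D s + K * (d s * d s))).
  assert (Hf : forall s, is_derive f s (df s)).
  { intros s; unfold f, df; auto_derive; [exact (ex_intro _ _ (Hd s)) |].
    replace (Derive (fun x => d x) s) with (D s) by (symmetry; apply is_derive_unique, Hd); ring. }
  assert (Hdf : forall s, 0 <= df s).
  { intros s; unfold df.
    assert (Hprod : Rabs (d s * D s) <= K * (d s * d s)).
    { rewrite Rabs_mult, <- (Rabs_pos_eq (d s * d s)) by nra.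
      rewrite Rabs_mult. pose proof (HD s); pose proof (Rabs_pos (d s)); nra. }
    pose proof (Rabs_le_between (d s * D s) (Rabs (d s * D s))) as Hb.
    pose proof (exp_pos (K * s)). nra. }
  pose proof (nondecreasing_of_derive_nonneg f df 0 t Hf Hdf Ht) as Hmono.
  unfold f in Hmono; rewrite Rmult_0_r, exp_0, Rmult_1_r in Hmono.
  assert (Habs : Rabs (d 0) <= Rabs (d t) * exp (K * t)).
  { rewrite <- (Rabs_pos_eq (exp (K * t))) by apply Rlt_le, exp_pos.
    rewrite <- Rabs_mult. apply Rsqr_le_abs_0. unfold Rsqr; nra. }
  replace (Rabs (d t)) with (Rabs (d t) * exp (K * t) * exp (- K * t)).
  - apply Rmult_le_compat_r; [apply Rlt_le, exp_pos | exact Habs].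
  - rewrite Rmult_assoc, <- exp_plus.
    replace (K * t + - K * t) with 0 by ring. rewrite exp_0; ring.
Qed.

Theorem lemma4p25 :
  forall (Rr : R) (phi : R -> R),
    0 < Rr ->
    smooth phi ->
    (forall x, 0 <= phi x) ->
    (forall x, phi (- x) = phi x) ->
    (forall x, Rr <= Rabs x -> phi x = 0) ->
    (forall x, Rabs x < Rr -> 0 < phi x) ->
    exists K : R, 0 < K /\
      forall (N : nat) (w : nat -> R) (x0 : nat -> R) (x : nat -> R -> R),
        (forall i, (i < N)%nat -> 0 <= w i <= 1) ->
        sumN N w = 1 ->
        (forall i j, (i < N)%nat -> (j < N)%nat -> Rabs (x0 i - x0 j) < Rr) ->
        (forall i, (i < N)%nat -> x i 0 = x0 i) ->
        (forall i, (i < N)%nat -> forall t : R,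
            is_derive (x i) t
              (- sumN N (fun j => w j * Derive (psi_of phi) (x i t - x j t)))) ->
        forall i j, (i < N)%nat -> (j < N)%nat -> forall t : R, 0 < t ->
          Rabs (x0 i - x0 j) * exp (- K * t) <= Rabs (x i t - x j t).
Proof.
  intros r phi _ phi_smooth _ _ phi_supp _.
  destruct (Derive_psi_of_lipschitz r phi phi_smooth phi_supp) as [L [HL Hlip]].
  exists (L + 1); split; [lra |].
  intros N w x0 x Hw Hsum _ Hinit Hder i j Hi Hj t Ht.
  set (drift := fun a s => sumN N (fun k => w k * Derive (psi_of phi) (x a s - x k s))).
  rewrite <- (Hinit i Hi), <- (Hinit j Hj).
  apply (gronwall_lower_bound (fun s => x i s - x j s)
           (fun s => - drift i s - - drift j s)); [| | lra].
  - intros s; apply (is_derive_minus (x i) (x j)); apply Hder; assumption.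
  - intros s; replace (- drift i s - - drift j s) with (- (drift i s - drift j s)) by ring.
    rewrite Rabs_Ropp.
    assert (Hdrift : Rabs (drift i s - drift j s) <= L * Rabs (x i s - x j s)).
    { apply weighted_sum_lipschitz; [intros k Hk; apply Hw, Hk | exact Hsum | exact Hlip]. }
    pose proof (Rabs_pos (x i s - x j s)); lra.
Qed.
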